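(* Let $W$ be a rational $\mathfrak{sl}(2)$-module. If $W$ is $\mathcal R$-simple, then $\mathrm{End}_{\mathfrak{sl}(2)}(W)=\mathbb{C}$ (the scalar multiples of the identity).
   Context: $\mathfrak{sl}(2)$ has basis $L_{-1}=f$, $L_0=-\tfrac12 h$, $L_1=-e$ for a Chevalley basis $e,f,h$. An $\mathfrak{sl}(2)$-module is a $\mathbb{C}[z]$-module via $z\cdot v=L_0 v$; it is rational if with this structure it is a finite-dimensional $\mathbb{C}(z)$-vector space. A rational module $W$ is $\mathcal R$-simple if $W\neq0$ and $W$ has no nonzero proper $\mathfrak{sl}(2)$-submodule that is a $\mathbb{C}(z)$-vector subspace (rational submodule). *)

(* C = R[i] with R : realType (hence C is (isomorphic to) the complex numbers). *)
From HB Require Import structures.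
From mathcomp Require Import all_boot all_order all_algebra.
From mathcomp Require Import fraction.
From mathcomp Require Import complex.
From mathcomp Require Import reals.
Set Implicit Arguments. Unset Strict Implicit. Unset Printing Implicit Defensive.
Import Order.TTheory GRing.Theory Num.Theory.
Local Open Scope ring_scope.

Section SL2Modules.
Variable R : realType.
Local Notation C := (R[i]).
Local Notation K := {fraction {poly C}}.
Variable W : lmodType C.

Definition is_sl2_module (E F H : {linear W -> W}) : Prop :=
  [/\ forall v, H (E v) - E (H v) = 2%:R *: E v,
      forall v, H (F v) - F (H v) = - (2%:R *: F v)
    & forall v, E (F v) - F (E v) = H v].

Definition L0 (H : {linear W -> W}) (v : W) : W := - ((2%:R : C)^-1 *: H v).

Definition peval (p : {poly C}) (f : W -> W) (v : W) : W :=
  \sum_(i < size p) p`_i *: iter i f v.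

(* act is a C(z)-vector space structure on W extending the C[z]-module
   structure z . v = L_0 v (such an extension is unique when it exists). *)
Definition is_Cz_structure (H : {linear W -> W}) (act : K -> W -> W) : Prop :=
  [/\ forall a (c : C) v w, act a (c *: v + w) = c *: act a v + act a w,
      forall a b v, act (a + b) v = act a v + act b v,
      forall a b v, act (a * b) v = act a (act b v),
      forall v, act 1 v = v
    & forall (p : {poly C}) v, act (FracField.tofrac p) v = peval p (L0 H) v].

Definition Cz_findim (act : K -> W -> W) : Prop :=
  exists (n : nat) (w : 'I_n -> W),
    forall v, exists c : 'I_n -> K, v = \sum_(i < n) act (c i) (w i).

Definition rational_sl2 (E F H : {linear W -> W}) (act : K -> W -> W) : Prop :=
  [/\ is_sl2_module E F H, is_Cz_structure H act & Cz_findim act].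

Definition sl2_submodule (E F H : {linear W -> W}) (S : W -> Prop) : Prop :=
  [/\ S 0,
      forall (c : C) v w, S v -> S w -> S (c *: v + w),
      forall v, S v -> S (E v),
      forall v, S v -> S (F v)
    & forall v, S v -> S (H v)].

Definition Cz_subspace (act : K -> W -> W) (S : W -> Prop) : Prop :=
  [/\ S 0,
      forall v w, S v -> S w -> S (v + w)
    & forall a v, S v -> S (act a v)].

Definition R_simple (E F H : {linear W -> W}) (act : K -> W -> W) : Prop :=
  (exists v : W, v != 0) /\
  forall S : W -> Prop, sl2_submodule E F H S -> Cz_subspace act S ->
    (forall v, S v -> v = 0) \/ (forall v, S v).

Definition sl2_endo (E F H : {linear W -> W}) (phi : {linear W -> W}) : Prop :=
  [/\ forall v, phi (E v) = E (phi v),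
      forall v, phi (F v) = F (phi v)
    & forall v, phi (H v) = H (phi v)].

End SL2Modules.

From HB Require Import structures.
From mathcomp Require Import all_boot all_order all_algebra.
From mathcomp Require Import fraction complex reals.
From mathcomp Require Import ring zify.
From Stdlib Require Import Classical.

(* phi commutes with L_0, i.e. with multiplication by z, so it is C(z)-linear,
   while E and F are semilinear for the shifts f(z) |-> f(z + 1) and
   f(z) |-> f(z - 1) of C(z).  If q is a monic irreducible polynomial over C(z)
   with q(phi) v = 0 for some v <> 0, then the j-fold shift of q kills E^j v.
   Only finitely many monic irreducible polynomials divide a nonzero polynomial
   annihilating phi (one exists as W is finite-dimensional over C(z)), so if
   no E^j v vanishes, q is invariant under a nonzero shift; its
   coefficients are then constants, and C being algebraically closed,
   q = X - c and phi has the eigenvalue c.  Otherwise some u = E^j v <> 0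
   satisfies E u = 0, and since E F^(j+1) u = (j+1)(j - 2z) F^j u with a
   nonzero coefficient, no F^j u vanishes and the F-ladder gives the invariant
   factor instead.  The c-eigenspace of phi is then a nonzero rational
   submodule, hence all of W. *)

Set Implicit Arguments. Unset Strict Implicit. Unset Printing Implicit Defensive.
Import Order.TTheory GRing.Theory Num.Theory.
Local Open Scope ring_scope.
Local Open Scope quotient_scope.

Local Notation "x %:F" := (@FracField.tofrac _ x).

Section FractionRepresentation.
Variable T : idomainType.

Lemma tofrac_numden (r : {ratio T}) :
  \pi_({fraction T}) r = (\n_r)%:F / (\d_r)%:F.
Proof.
have dF0 : (\d_r)%:F != 0 :> {fraction T} by rewrite tofrac_eq0 denom_ratioP.
apply: (mulIf dF0); rewrite divfK //.
unlock FracField.tofrac; rewrite -[LHS]pi_mul; apply/eqmodP.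
rewrite /= FracField.equivfE /FracField.mulf /=.
by rewrite !numden_Ratio ?oner_eq0 ?mulf_neq0 ?oner_neq0 ?denom_ratioP // !mulr1 mulrC.
Qed.

Lemma exists_numden (x : {fraction T}) : exists2 nd : T * T, nd.2 != 0 & x = nd.1%:F / nd.2%:F.
Proof. by exists (frac (repr x)); rewrite /= ?denom_ratioP // -tofrac_numden reprK. Qed.

Lemma eq_frac (n d n' d' : T) : d != 0 -> d' != 0 ->
  (n%:F / d%:F == n'%:F / d'%:F :> {fraction T}) = (n * d' == n' * d).
Proof. by move=> d0 d'0; rewrite eqr_div ?tofrac_eq0 // -!tofracM tofrac_eq. Qed.

End FractionRepresentation.

Section Shift.
Variable C : fieldType.
Local Notation K := {fraction {poly C}}.
Local Notation shiftp s p := (p \Po ('X + s%:P)).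

Lemma shiftp_eq0 s (p : {poly C}) : (shiftp s p == 0) = (p == 0).
Proof. by rewrite -!size_poly_eq0 size_comp_poly2 // size_XaddC. Qed.

Lemma shiftpD s t (p : {poly C}) : shiftp s (shiftp t p) = shiftp (s + t) p.
Proof. by rewrite -comp_polyA comp_polyD comp_polyX comp_polyC polyCD addrA. Qed.

Definition shift (s : C) (x : K) : K :=
  (shiftp s \n_(repr x))%:F / (shiftp s \d_(repr x))%:F.

Lemma shift_frac s (n d : {poly C}) : d != 0 ->
  shift s (n%:F / d%:F) = (shiftp s n)%:F / (shiftp s d)%:F.
Proof.
move=> d0; rewrite /shift; set x := n%:F / d%:F.
have : x == (\n_(repr x))%:F / (\d_(repr x))%:F by rewrite -tofrac_numden reprK.
rewrite eq_frac ?denom_ratioP // => /eqP nd_eq.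
by apply/eqP; rewrite eq_frac ?shiftp_eq0 ?denom_ratioP // -!comp_polyM -nd_eq.
Qed.

Lemma shift_tofrac s p : shift s p%:F = (shiftp s p)%:F.
Proof.
by rewrite -[p%:F]divr1 -tofrac1 shift_frac ?oner_eq0 // comp_polyC divr1.
Qed.

Lemma shift_is_zmod_morphism s : zmod_morphism (shift s).
Proof.
move=> x y; have [[n d] /= d0 ->] := exists_numden x; have [[n' d'] /= d'0 ->] := exists_numden y.
have sd0 : shiftp s d != 0 by rewrite shiftp_eq0.
have sd'0 : shiftp s d' != 0 by rewrite shiftp_eq0.
rewrite (shift_frac s n d0) (shift_frac s n' d'0) -!mulNr -!tofracN.
rewrite !addf_div ?tofrac_eq0 // -!tofracM -!tofracD shift_frac ?mulf_neq0 //.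
by rewrite comp_polyD !comp_polyM raddfN.
Qed.

Lemma shift_is_monoid_morphism s : monoid_morphism (shift s).
Proof.
split; first by rewrite -tofrac1 shift_tofrac comp_polyC.
move=> x y; have [[n d] /= d0 ->] := exists_numden x; have [[n' d'] /= d'0 ->] := exists_numden y.
rewrite !shift_frac // mulf_div -!tofracM shift_frac ?mulf_neq0 //.
by rewrite !comp_polyM mulf_div -!tofracM.
Qed.

HB.instance Definition _ s :=
  GRing.isZmodMorphism.Build K K (shift s) (shift_is_zmod_morphism s).
HB.instance Definition _ s :=
  GRing.isMonoidMorphism.Build K K (shift s) (shift_is_monoid_morphism s).

Lemma shiftD s t x : shift s (shift t x) = shift (s + t) x.
Proof.
have [[n d] /= d0 ->] := exists_numden x.
by rewrite (shift_frac t _ d0) !shift_frac ?shiftp_eq0 // !shiftpD.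
Qed.

Lemma shift0 x : shift 0 x = x.
Proof.
have [[n d] /= d0 ->] := exists_numden x.
by rewrite shift_frac // addr0 !comp_polyXr.
Qed.

Lemma shiftX s : shift s 'X%:F = 'X%:F + (s%:P)%:F.
Proof. by rewrite shift_tofrac comp_polyX tofracD. Qed.

Lemma map_shiftD s t (p : {poly K}) :
  map_poly (shift s) (map_poly (shift t) p) = map_poly (shift (s + t)) p.
Proof. by rewrite -map_poly_comp; apply: eq_map_poly => x /=; rewrite shiftD. Qed.

Lemma map_shift0 (p : {poly K}) : map_poly (shift 0) p = p.
Proof. by rewrite (eq_map_poly shift0) map_poly_id. Qed.

Lemma irreducible_map_shift s (q : {poly K}) :
  irreducible_poly q -> irreducible_poly (map_poly (shift s) q).
Proof.
move=> [q_gt1 q_irr]; split=> [|d d_neq1]; first by rewrite size_map_poly.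
rewrite -[d](map_shift0) -(subrr s) -map_shiftD dvdp_map => /q_irr.
by rewrite size_map_poly => /(_ d_neq1); rewrite -(eqp_map (shift s)).
Qed.

End Shift.

Lemma poly_eq0_of_inj_roots (D : idomainType) (p : {poly D}) (f : nat -> D) :
  injective f -> (forall k, root p (f k)) -> p = 0.
Proof.
move=> f_inj p_f; apply: (@roots_geq_poly_eq0 _ p [seq f k | k <- iota 0 (size p)]).
- by apply/allP => _ /mapP [k _ ->].
- by rewrite map_inj_uniq ?iota_uniq.
- by rewrite size_map size_iota.
Qed.

Section ShiftFixedPoints.
Variable C : numFieldType.

Lemma shift_fixed t (x : {fraction {poly C}}) : t != 0 -> shift t x = x ->
  exists c : C, x = (c%:P)%:F.
Proof.
have [[n d] /= d0 ->] := exists_numden x; move=> t0 fix_x.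
have periodic k : (n \Po ('X + (t *+ k)%:P)) * d = n * (d \Po ('X + (t *+ k)%:P)).
  have : shift (t *+ k) (n%:F / d%:F) = n%:F / d%:F.
    by elim: k => [|k IH]; rewrite ?shift0 // mulrS -shiftD IH fix_x.
  rewrite shift_frac // => /eqP.
  by rewrite eq_frac ?shiftp_eq0 // => /eqP.
have [z0 dz0] : exists z0, d.[z0] != 0.
  apply: NNPP => no_z0; move/negP: d0; apply; apply/eqP.
  apply: (@poly_eq0_of_inj_roots _ _ (fun k : nat => k%:R)) => [i j /eqP|k].
    by rewrite eqr_nat => /eqP.
  by apply: contraT => dk0; case: no_z0; exists k%:R.
pose Q := d.[z0] *: n - n.[z0] *: d.
have Q0 : Q = 0.
  apply: (@poly_eq0_of_inj_roots _ _ (fun k => z0 + t *+ k)) => [i j /addrI|k].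
    exact: mulrIn.
  have := congr1 (horner^~ z0) (periodic k).
  rewrite /root /Q /= !hornerE !horner_comp !hornerE mulrC => ->.
  by rewrite subrr.
exists (n.[z0] / d.[z0]); set c := n.[z0] / d.[z0].
have -> : n = c *: d.
  move/eqP: Q0; rewrite subr_eq0 => /eqP eQ.
  by rewrite /c mulrC -scalerA -eQ scalerA mulVf ?scale1r.
by rewrite -mul_polyC tofracM mulfK // tofrac_eq0.
Qed.

End ShiftFixedPoints.

Section IrreducibleFactors.
Variable F : fieldType.
Implicit Types p q d m : {poly F}.

Lemma irreducible_eqp p q : p %= q -> irreducible_poly p -> irreducible_poly q.
Proof.
move=> pq [p_gt1 p_irr]; split=> [|d d_neq1 dq]; first by rewrite -(eqp_size pq).
by rewrite (eqp_trans (p_irr d d_neq1 _) pq) // (eqp_dvdr _ pq).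
Qed.

Lemma ex_monic_irreducible_dvdp p : (1 < size p)%N ->
  exists q, [/\ q \is monic, irreducible_poly q & q %| p].
Proof.
have [n] := ubnP (size p); elim: n p => // n IH p sp p_gt1.
have p0 : p != 0 by rewrite -size_poly_gt0 ltnW.
have [p_irr|p_red] := classic (irreducible_poly p).
  have lp0 : lead_coef p != 0 by rewrite lead_coef_eq0.
  exists ((lead_coef p)^-1 *: p); split.
  - by rewrite monicE lead_coefZ mulVf.
  - by apply: irreducible_eqp p_irr; rewrite eqp_sym eqp_scale ?invr_eq0.
  - by rewrite dvdpZl ?invr_eq0.
have [d [d_neq1 dp d_neqp]] : exists d, [/\ size d != 1, d %| p & ~ d %= p].
  apply: NNPP => no_d; apply: p_red; split=> // d d_neq1 dp.
  by apply: NNPP => d_neqp; apply: no_d; exists d.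
have d0 : d != 0 by apply: contraTneq dp => ->; rewrite dvd0p.
have d_gt1 : (1 < size d)%N by rewrite ltn_neqAle eq_sym d_neq1 size_poly_gt0.
have d_lt : (size d < size p)%N.
  by rewrite ltn_neqAle dvdp_leq // andbT dvdp_size_eqp //; apply/negP.
have [q [q_mon q_irr qd]] := IH d (leq_trans d_lt sp) d_gt1.
by exists q; split; last exact: dvdp_trans qd dp.
Qed.

Lemma coprime_divisors_lt_size m (q : nat -> {poly F}) k : m != 0 ->
    (forall j, (j < k)%N -> q j %| m) -> (forall j, (1 < size (q j))%N) ->
    (forall i j, (i < j < k)%N -> coprimep (q i) (q j)) ->
  (k < size m)%N.
Proof.
move=> m0 qm q_gt1 q_cop.
suff [dvd_m k_lt] : \prod_(j < k) q j %| m /\ (k < size (\prod_(j < k) q j)%R)%N.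
  exact: leq_trans k_lt (dvdp_leq m0 dvd_m).
elim: k qm q_cop => [|k IH] qm q_cop; first by rewrite big_ord0 dvd1p size_poly1.
have [|dvd_m k_lt] := IH (fun j jk => qm j (ltnW jk)).
  by move=> i j /andP [ij jk]; rewrite q_cop // ij ltnW.
have q0 j : q j != 0 by rewrite -size_poly_gt0 ltnW.
have cop : coprimep (\prod_(j < k) q j) (q k).
  apply: (big_ind (fun x => coprimep x (q k))) => [|x y|j _]; first exact: coprime1p.
    by rewrite coprimepMl => -> ->.
  by rewrite q_cop // ltn_ord /=.
have prod0 : \prod_(j < k) q j != 0 by rewrite -size_poly_gt0 (leq_trans _ k_lt).
rewrite big_ord_recr /= Gauss_dvdp // dvd_m qm //; split=> //.
rewrite size_mul //; move: k_lt (q_gt1 k); move: (size _) (size _) => a b; clear; lia.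
Qed.

End IrreducibleFactors.

Section FinitelySpanned.
Variables (K : fieldType) (V : lmodType K).

Definition finitely_spanned :=
  exists n (w : 'I_n -> V), forall v, exists c : 'I_n -> K, v = \sum_i c i *: w i.

Lemma span_dependent n (w : 'I_n -> V) (u : 'I_n.+1 -> V) :
    (forall j, exists c : 'I_n -> K, u j = \sum_k c k *: w k) ->
  exists2 x : 'rV[K]_n.+1, x != 0 & \sum_j x 0 j *: u j = 0.
Proof.
move=> u_span.
have [M uM] : exists M : 'M[K]_(n.+1, n), forall j, u j = \sum_k M j k *: w k.
  have /fin_all_exists [c cE] : forall j, exists c : 'rV[K]_n, u j = \sum_k c 0 k *: w k.
    move=> j; have [c ->] := u_span j; exists (\row_k c k).
    by apply: eq_bigr => k _; rewrite mxE.
  by exists (\matrix_(j, k) c j 0 k) => j; rewrite cE; apply: eq_bigr => k _; rewrite mxE.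
exists (nz_row (kermx M)).
  by rewrite nz_row_eq0 kermx_eq0 /row_free neq_ltn (leq_ltn_trans (rank_leq_col M)).
have xM : nz_row (kermx M) *m M = 0 by apply/sub_kermxP; exact: nz_row_sub.
under eq_bigr do rewrite uM scaler_sumr.
rewrite exchange_big /=; apply: big1 => k _.
under eq_bigr do rewrite scalerA.
have := congr1 (fun y : 'rV_n => y 0 k) xM; rewrite !mxE => xMk.
by rewrite -scaler_suml xMk scale0r.
Qed.

End FinitelySpanned.

Section EndomorphismPolynomials.
Variables (K : fieldType) (V : lmodType K) (phi : {linear V -> V}).

Definition aeval (p : {poly K}) (v : V) : V :=
  foldr (fun a w => a *: v + phi w) 0 p.

Lemma aeval0 v : aeval 0 v = 0.
Proof. by rewrite /aeval polyseq0. Qed.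

Lemma aeval_cons p a v : aeval (p * 'X + a%:P) v = a *: v + phi (aeval p v).
Proof.
rewrite -cons_poly_def /aeval polyseq_cons.
case: nilP => [p0 | _] //=; rewrite p0 /= linear0 addr0 polyseqC.
by case: eqP => [->|_] /=; rewrite ?scale0r ?linear0 ?addr0.
Qed.

Lemma aevalC a v : aeval a%:P v = a *: v.
Proof. by rewrite -[a%:P]add0r -(mul0r 'X) aeval_cons aeval0 linear0 addr0. Qed.

Lemma aeval_is_linear p : linear (aeval p).
Proof.
elim/poly_ind: p => [|p a IH] c v w; first by rewrite !aeval0 scaler0 addr0.
rewrite !aeval_cons IH linearD linearZ /= !scalerDr !scalerA mulrC -!addrA.
by rewrite linearP; congr (_ + _); rewrite addrCA.
Qed.

HB.instance Definition _ p := GRing.isLinear.Build K V V *:%R (aeval p)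
  (aeval_is_linear p).

Lemma aevalD p q v : aeval (p + q) v = aeval p v + aeval q v.
Proof.
elim/poly_ind: p q => [|p a IH] q; first by rewrite add0r aeval0 add0r.
elim/poly_ind: q => [|q b _]; first by rewrite addr0 aeval0 addr0.
rewrite addrACA -mulrDl -polyCD !aeval_cons IH scalerDl linearD.
by rewrite addrACA.
Qed.

Lemma aevalCM a p v : aeval (a%:P * p) v = a *: aeval p v.
Proof.
elim/poly_ind: p => [|p b IH]; first by rewrite mulr0 aeval0 scaler0.
by rewrite mulrDr mulrA -polyCM !aeval_cons IH [phi _]linearZ scalerDr scalerA.
Qed.

Lemma aevalM p q v : aeval (p * q) v = aeval p (aeval q v).
Proof.
elim/poly_ind: p => [|p a IH]; first by rewrite mul0r !aeval0.
by rewrite aeval_cons -IH mulrDl mulrAC aevalD aevalCM -[_ * 'X]addr0 -polyC0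
  aeval_cons scale0r add0r addrC.
Qed.

Lemma aevalXn i v : aeval 'X^i v = iter i phi v.
Proof.
elim: i => [|i IH]; first by rewrite expr0 -polyC1 aevalC scale1r.
by rewrite exprSr -[_ * 'X]addr0 -polyC0 aeval_cons scale0r add0r IH.
Qed.

Lemma aeval_poly n (c : nat -> K) v :
  aeval (\poly_(i < n) c i) v = \sum_(i < n) c i *: iter i phi v.
Proof.
rewrite poly_def (big_morph (aeval^~ v) (fun p q => aevalD p q v) (aeval0 v)).
by apply: eq_bigr => i _; rewrite -mul_polyC aevalCM aevalXn.
Qed.

Lemma aeval_XsubC a v : aeval ('X - a%:P) v = phi v - a *: v.
Proof.
rewrite -[ 'X]mul1r -polyCN aeval_cons -polyC1 aevalC scale1r.
by rewrite scaleNr addrC.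
Qed.

Lemma aeval_semilinear (T : {additive V -> V}) (f : {rmorphism K -> K}) :
    (forall a v, T (a *: v) = f a *: T v) -> (forall v, T (phi v) = phi (T v)) ->
  forall p v, T (aeval p v) = aeval (map_poly f p) (T v).
Proof.
move=> TZ Tphi; elim/poly_ind => [|p a IH] v; first by rewrite map_poly0 !aeval0 raddf0.
rewrite rmorphD rmorphM /= map_polyX map_polyC /= !aeval_cons.
by rewrite raddfD TZ Tphi IH.
Qed.

Definition annihilating (p : {poly K}) := forall v, aeval p v = 0.

Lemma exists_annihilating : finitely_spanned V -> exists2 m, m != 0 & annihilating m.
Proof.
move=> [n [w w_span]].
have ann v : exists p, (p != 0) && (aeval p v == 0).
  have [x x0 xu] := span_dependent (u := fun j => iter j phi v) (fun j => w_span _).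
  exists (\poly_(j < n.+1) x 0 (inord j)); apply/andP; split.
    apply: contraNneq x0 => x_poly0; apply/eqP/rowP => j; rewrite !mxE.
    by have := congr1 (coefp j) x_poly0; rewrite /= coef_poly ltn_ord inord_val coef0.
  apply/eqP; rewrite aeval_poly -[RHS]xu; apply: eq_bigr => j _.
  by rewrite inord_val.
have [p pP] := fin_all_exists (fun k : 'I_n => ann (w k)).
exists (\prod_k p k); first by apply/prodf_neq0 => k _; case/andP: (pP k).
move=> v; have [c ->] := w_span v; rewrite linear_sum; apply: big1 => k _.
rewrite linearZ (bigD1 k) //= mulrC aevalM.
by case/andP: (pP k) => _ /eqP ->; rewrite linear0 scaler0.
Qed.

Definition singular (p : {poly K}) := exists2 v, v != 0 & aeval p v = 0.

Lemma coprimep_aeval_inj p m v :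
  coprimep p m -> annihilating m -> aeval p v = 0 -> v = 0.
Proof.
case/Bezout_coprimepP => -[u w] /= /eqp_size; rewrite size_poly1 => uw_size mA pv0.
have uwC := size1_polyC (eq_leq uw_size).
have uw0 : (u * p + w * m)`_0 != 0.
  by apply/eqP => c0; move: uw_size; rewrite uwC c0 polyC0 size_poly0.
have := aevalC (u * p + w * m)`_0 v; rewrite -uwC aevalD !aevalM pv0 mA !linear0.
by move/esym/eqP; rewrite addr0 scaler_eq0 (negPf uw0) => /eqP.
Qed.

Lemma singular_irreducible_dvdp q m :
  annihilating m -> irreducible_poly q -> singular q -> q %| m.
Proof.
move=> mA q_irr [v v0 qv0]; apply: contraTT v0 => q_ndvd.
by rewrite (coprimep_aeval_inj _ mA qv0) ?irreducible_poly_coprime ?eqxx.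
Qed.

Lemma exists_singular_irreducible m : (exists v : V, v != 0) ->
  m != 0 -> annihilating m -> exists q, [/\ q \is monic, irreducible_poly q & singular q].
Proof.
move=> [v v0]; have [n] := ubnP (size m); elim: n m => // n IH m sm m0 mA.
have m_gt1 : (1 < size m)%N.
  rewrite ltnNge; apply: contra v0 => /size1_polyC mC.
  have /eqP := mA v; rewrite mC aevalC scaler_eq0 -polyC_eq0 -mC.
  by rewrite (negPf m0).
have [q [q_mon q_irr /dvdpP [r mE]]] := ex_monic_irreducible_dvdp m_gt1.
have [q_sing|q_nsing] := classic (singular q); first by exists q.
have r0 : r != 0 by apply: contraNneq m0 => r0; rewrite mE r0 mul0r.
have q0 := irredp_neq0 q_irr.
have r_lt : (size r < n)%N.
  have [q_gt1 _] := q_irr; move: sm q_gt1; rewrite mE size_mul //.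
  by move: (size r) (size q) => a b; clear; lia.
suff rA : annihilating r by apply: (IH r r_lt r0 rA).
move=> w; apply: NNPP => rw0; apply: q_nsing; exists (aeval r w); first exact/eqP.
by rewrite -aevalM mulrC -mE mA.
Qed.

End EndomorphismPolynomials.

Section Ladder.
Variables (C : numFieldType) (V : lmodType {fraction {poly C}}).
Variable phi : {linear V -> V}.
Variables (T : {additive V -> V}) (s : C).
Hypothesis T_shift : forall a v, T (a *: v) = shift s a *: T v.
Hypothesis T_phi : forall v, T (phi v) = phi (T v).

Lemma aeval_iter_shift q v : aeval phi q v = 0 ->
  forall j, aeval phi (map_poly (shift (s *+ j)) q) (iter j T v) = 0.
Proof.
move=> qv0; elim=> [|j IH]; first by rewrite map_shift0.
by rewrite iterS mulrS -map_shiftD -(aeval_semilinear T_shift T_phi) IH raddf0.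
Qed.

Lemma ladder_periodic m q v : s != 0 -> m != 0 -> annihilating phi m ->
    q \is monic -> irreducible_poly q -> aeval phi q v = 0 ->
    (forall j, iter j T v != 0) ->
  exists2 t, t != 0 & map_poly (shift t) q = q.
Proof.
move=> s0 m0 mA q_mon q_irr qv0 Tv0.
pose qj j := map_poly (shift (s *+ j)) q.
have qj_dvd j : qj j %| m.
  apply: singular_irreducible_dvdp mA (irreducible_map_shift _ q_irr) _.
  by exists (iter j T v); [exact: Tv0 | exact: aeval_iter_shift].
have [i [j [ij qij]]] : exists i j, (i < j)%N /\ qj i = qj j.
  apply: NNPP => qj_inj; suff: (size m < size m)%N by rewrite ltnn.
  apply: (coprime_divisors_lt_size m0 (fun j _ => qj_dvd j)) => [j|i j /andP [ij _]].
    by rewrite size_map_poly; case: q_irr.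
  rewrite irreducible_poly_coprime; last by apply: irreducible_map_shift.
  apply/negP => qij.
  apply: qj_inj; exists i, j; split=> //; apply/eqP.
  by rewrite -eqp_monic ?map_monic // -(dvdp_size_eqp qij) /qj !size_map_poly.
exists (s *+ j - s *+ i).
  rewrite -mulrnBr; last exact: ltnW.
  by rewrite mulrn_eq0 negb_or subn_eq0 -ltnNge ij.
have := congr1 (map_poly (shift (- (s *+ i)))) qij.
by rewrite /qj !map_shiftD addNr map_shift0 addrC => /esym.
Qed.

End Ladder.

Section HighestWeight.
Variables (C : numFieldType) (V : lmodType {fraction {poly C}}).
Variables E F : {additive V -> V}.
Local Notation z := ('X%:F : {fraction {poly C}}).
Hypothesis F_shift : forall a v, F (a *: v) = shift (-1) a *: F v.
Hypothesis EF_commutator : forall v, E (F v) = F (E v) - (2 * z) *: v.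

Definition lowering_coef (j : nat) : {fraction {poly C}} := j%:R * (j%:R - 1 - 2 * z).

Lemma E_iter_F v : E v = 0 ->
  forall j, E (iter j.+1 F v) = lowering_coef j.+1 *: iter j F v.
Proof.
move=> Ev0; elim=> [|j IH].
  rewrite /= EF_commutator Ev0 raddf0 sub0r -scaleNr /lowering_coef.
  by congr (_ *: _); ring.
rewrite [iter j.+2 F v]iterS EF_commutator IH F_shift -scalerBl; congr (_ *: _).
rewrite /lowering_coef rmorphM !rmorphB rmorphM !rmorph_nat rmorph1 /= shiftX.
by rewrite polyCN tofracN tofrac1 -!natr1; ring.
Qed.

Lemma lowering_coef_neq0 j : lowering_coef j.+1 != 0.
Proof.
have cst_nat n : (n%:R : {fraction {poly C}}) = ((n%:R)%:P)%:F by rewrite !rmorph_nat.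
rewrite /lowering_coef mulf_neq0 //.
  by rewrite cst_nat tofrac_eq0 polyC_eq0 pnatr_eq0.
rewrite -natr1 addrK subr_eq0 !cst_nat -tofracM tofrac_eq.
apply/negP => /eqP/(congr1 (fun p : {poly C} => size p)).
by rewrite mul_polyC size_scale ?pnatr_eq0 // size_polyX size_polyC; case: (_ != 0).
Qed.

Lemma highest_weight_vanishing v N : E v = 0 -> iter N F v = 0 -> v = 0.
Proof.
move=> Ev0; elim: N => // N IH FNv0; apply: IH.
have := E_iter_F Ev0 N; rewrite FNv0 raddf0 => /esym/eqP.
by rewrite scaler_eq0 (negPf (lowering_coef_neq0 N)) => /eqP.
Qed.

End HighestWeight.

Section Eigenvector.
Variables (C : numClosedFieldType) (V : lmodType {fraction {poly C}}).
Local Notation K := {fraction {poly C}}.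
Variable phi : {linear V -> V}.

Lemma periodic_irreducible_linear t (q : {poly K}) : t != 0 ->
    q \is monic -> irreducible_poly q -> map_poly (shift t) q = q ->
  exists c : C, q = 'X - ((c%:P)%:F)%:P.
Proof.
move=> t0 q_mon q_irr q_per.
have cst i : exists c, q`_i == (c%:P)%:F.
  have fix_i : shift t q`_i = q`_i by rewrite -coef_map q_per.
  (* [apply/eqP]: closing [x == x] by computation would evaluate equality
     in the fraction field. *)
  by have [c ->] := @shift_fixed C t _ t0 fix_i; exists c; apply/eqP.
pose cF : {rmorphism C -> K} := @FracField.tofrac _ \o polyC.
pose c_ i := xchoose (cst i).
pose q' := \poly_(i < size q) c_ i.
have q'E : map_poly cF q' = q.
  apply/polyP => i; rewrite coef_map coef_poly; case: ltnP => iq /=.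
    by rewrite (eqP (xchooseP (cst i))).
  by rewrite rmorph0 nth_default.
have [c c_root] : exists c, root q' c.
  by apply/closed_rootP; rewrite -(size_map_poly cF) q'E; case: q_irr => /gtn_eqF ->.
exists c; apply/eqP; rewrite -eqp_monic ?monicXsubC // eqp_sym.
apply: q_irr; first by rewrite size_XsubC.
by rewrite -q'E -[(c%:P)%:F]/(cF c) -map_polyXsubC dvdp_map dvdp_XsubCl.
Qed.

Lemma eigenvector_of_periodic t q : t != 0 -> q \is monic -> irreducible_poly q ->
    map_poly (shift t) q = q -> singular phi q ->
  exists (c : C) (v : V), v != 0 /\ phi v = (c%:P)%:F *: v.
Proof.
move=> t0 q_mon q_irr q_per [v v0 qv0].
have [c q_lin] := periodic_irreducible_linear t0 q_mon q_irr q_per.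
by exists c, v; split=> //; apply/eqP; rewrite -subr_eq0 -aeval_XsubC -q_lin qv0.
Qed.

Variables E F : {additive V -> V}.
Hypothesis E_shift : forall a v, E (a *: v) = shift 1 a *: E v.
Hypothesis F_shift : forall a v, F (a *: v) = shift (-1) a *: F v.
Hypothesis E_phi : forall v, E (phi v) = phi (E v).
Hypothesis F_phi : forall v, F (phi v) = phi (F v).
Hypothesis EF_commutator : forall v, E (F v) = F (E v) - (2 * 'X%:F) *: v.

Lemma exists_eigenvector : finitely_spanned V -> (exists v : V, v != 0) ->
  exists (c : C) (v : V), v != 0 /\ phi v = (c%:P)%:F *: v.
Proof.
move=> V_fin V_neq0.
have [m m0 mA] := exists_annihilating phi V_fin.
have [q [q_mon q_irr [v v0 qv0]]] := exists_singular_irreducible V_neq0 m0 mA.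
have [Ev_null|E_nil] := classic (exists j, iter j E v == 0); last first.
  have Ev0 j : iter j E v != 0 by apply/negP => Ejv0; apply: E_nil; exists j.
  have [t t0 q_per] :=
    ladder_periodic E_shift E_phi (oner_neq0 _) m0 mA q_mon q_irr qv0 Ev0.
  by apply: eigenvector_of_periodic t0 q_mon q_irr q_per _; exists v.
case: (ex_minnP Ev_null) => -[|j] /eqP Eu0 j_min; first by case/eqP: v0.
set u := iter j E v in Eu0; change (E u = 0) in Eu0.
have u0 : u != 0 by apply/negP => uj0; have := j_min j uj0; rewrite ltnn.
pose q' := map_poly (shift (1 *+ j)) q.
have q'u0 : aeval phi q' u = 0 := aeval_iter_shift E_shift E_phi qv0 j.
have q'_mon : q' \is monic by rewrite map_monic.
have q'_irr : irreducible_poly q' by apply: irreducible_map_shift.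
have [[N FNu0]|F_nil] := classic (exists N, iter N F u = 0).
  case/negP: u0; apply/eqP.
  by apply: (highest_weight_vanishing F_shift EF_commutator Eu0 FNu0).
have Fu0 N : iter N F u != 0 by apply/eqP => FNu0; apply: F_nil; exists N.
have m1_neq0 : (-1 : C) != 0 by rewrite oppr_eq0 oner_eq0.
have [t t0 q'_per] := ladder_periodic F_shift F_phi m1_neq0 m0 mA q'_mon q'_irr q'u0 Fu0.
by apply: eigenvector_of_periodic t0 q'_mon q'_irr q'_per _; exists u.
Qed.

End Eigenvector.

Section RationalModules.
Variable R : realType.
Local Notation C := R[i].
Local Notation K := {fraction {poly C}}.
Variables (W : lmodType C) (E F H : {linear W -> W}) (act : K -> W -> W).
Hypothesis W_sl2 : is_sl2_module E F H.
Hypothesis W_Cz : is_Cz_structure H act.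

(* The Cz-structure is a phantom argument: it lets the C(z)-module instance
   below be found from the type alone. *)
Definition Cz_space of is_Cz_structure H act : Type := W.
Local Notation V := (Cz_space W_Cz).
HB.instance Definition _ := GRing.Zmodule.on V.

Lemma Cz_scalerA a b (v : V) : act a (act b v) = act (a * b) v.
Proof. by have [_ _ -> _ _] := W_Cz. Qed.

Lemma Cz_scale1r : left_id 1 act.
Proof. by have [] := W_Cz. Qed.

Lemma Cz_scalerDr : right_distributive act (@GRing.add V).
Proof. by move=> a v w; have [+ _ _ _ _] := W_Cz => /(_ a 1 v w); rewrite !scale1r. Qed.

Lemma Cz_scalerDl (v : V) : {morph act^~ v : a b / a + b}.
Proof. by move=> a b; have [_ -> _ _ _] := W_Cz. Qed.

HB.instance Definition _ := GRing.Zmodule_isLmodule.Build K V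
  Cz_scalerA Cz_scale1r Cz_scalerDr Cz_scalerDl.

Lemma Cz_scaleC c (v : V) : (c%:P)%:F *: v = c *: (v : W).
Proof.
change (act (c%:P)%:F v = c *: (v : W)); have [_ _ _ _ ->] := W_Cz.
rewrite /peval size_polyC.
by have [->|c0] := eqVneq c 0; rewrite ?big_ord0 ?scale0r // big_ord1 coefC.
Qed.

Lemma Cz_scaleX (v : V) : 'X%:F *: v = L0 H v.
Proof.
change (act 'X%:F v = L0 H v); have [_ _ _ _ ->] := W_Cz.
rewrite /peval size_polyX !big_ord_recl big_ord0 !coefX /=.
by rewrite scale0r add0r scale1r addr0.
Qed.

Lemma Cz_semilinear (T : {linear W -> W}) (s : C) :
    (forall v, T (L0 H v) = L0 H (T v) + s *: T v) ->
  forall a (v : V), T (a *: v) = shift s a *: (T v : V).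
Proof.
move=> T_L0.
have T_poly p (v : V) : T (p%:F *: v) = (p \Po ('X + s%:P))%:F *: (T v : V).
  elim/poly_ind: p v => [|p c IH] v; first by rewrite comp_poly0 !tofrac0 !scale0r linear0.
  rewrite tofracD tofracM scalerDl -scalerA Cz_scaleX Cz_scaleC linearD linearZ /= IH.
  rewrite T_L0 -Cz_scaleX -!Cz_scaleC -(@scalerDl _ V) scalerA -(@scalerDl _ V).
  by rewrite comp_polyD comp_polyM comp_polyX comp_polyC tofracD tofracM tofracD.
move=> a v; have [[n d] /= d0 ->] := exists_numden a.
have sd0 : (d \Po ('X + s%:P))%:F != 0 by rewrite tofrac_eq0 shiftp_eq0.
apply: (@scalerI _ V _ sd0); rewrite shift_frac // scalerA mulrCA mulfV // mulr1.
by rewrite -T_poly scalerA mulrCA mulfV ?tofrac_eq0 // mulr1 T_poly.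
Qed.

Lemma E_L0 v : E (L0 H v) = L0 H (E v) + 1 *: E v.
Proof.
have [HE _ _] := W_sl2.
have HEv : H (E v) = E (H v) + 2%:R *: E v by rewrite -HE addrC subrK.
rewrite /L0 linearN linearZ /= HEv scalerDr scalerA mulVf ?pnatr_eq0 // scale1r.
by rewrite opprD subrK.
Qed.

Lemma F_L0 v : F (L0 H v) = L0 H (F v) + (-1) *: F v.
Proof.
have [_ HF _] := W_sl2.
have HFv : H (F v) = F (H v) - 2%:R *: F v by rewrite -HF addrC subrK.
rewrite /L0 linearN linearZ /= HFv scalerBr scalerA mulVf ?pnatr_eq0 // scale1r.
by rewrite opprB scaleN1r addrAC subrr add0r.
Qed.

Definition Cz_map (T : W -> W) : V -> V := T.
HB.instance Definition _ (T : {linear W -> W}) :=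
  GRing.isZmodMorphism.Build V V (Cz_map T) (raddfB T).

Lemma H_Cz_scale (v : V) : H v = - ((2 * 'X%:F) *: v).
Proof.
have two : (2%:R : K) = ((2%:R : C)%:P)%:F by rewrite !rmorph_nat.
rewrite -scalerA Cz_scaleX two Cz_scaleC /L0 scalerN opprK scalerA mulfV ?pnatr_eq0 //.
by rewrite scale1r.
Qed.

Variable phi : {linear W -> W}.
Hypothesis phi_endo : sl2_endo E F H phi.

Lemma phi_L0 v : phi (L0 H v) = L0 H (phi v) + 0 *: phi v.
Proof.
by have [_ _ phiH] := phi_endo; rewrite scale0r addr0 /L0 linearN linearZ /= phiH.
Qed.

Lemma Cz_map_phi_scalable : scalable (Cz_map phi).
Proof. by move=> a v; rewrite /Cz_map (Cz_semilinear phi_L0) shift0. Qed.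

HB.instance Definition _ :=
  GRing.isScalable.Build K V V *:%R (Cz_map phi) Cz_map_phi_scalable.

Lemma sl2_endo_eigenvector : Cz_findim act -> (exists v : W, v != 0) ->
  exists (c : C) (v : W), v != 0 /\ phi v = c *: v.
Proof.
move=> W_fin W_neq0.
have [phiE phiF _] := phi_endo; have [_ _ EF] := W_sl2.
have E_phi v : Cz_map E (Cz_map phi v) = Cz_map phi (Cz_map E v) by rewrite /Cz_map phiE.
have F_phi v : Cz_map F (Cz_map phi v) = Cz_map phi (Cz_map F v) by rewrite /Cz_map phiF.
have EF_commutator v : Cz_map E (Cz_map F v) = Cz_map F (Cz_map E v) - (2 * 'X%:F) *: v.
  by rewrite /Cz_map -H_Cz_scale -EF addrC subrK.
have E_shift a v : Cz_map E (a *: v) = shift 1 a *: Cz_map E v :=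
  Cz_semilinear E_L0 a v.
have F_shift a v : Cz_map F (a *: v) = shift (-1) a *: Cz_map F v :=
  Cz_semilinear F_L0 a v.
have [c [v [v0 phiv]]] :=
  exists_eigenvector E_shift F_shift E_phi F_phi EF_commutator W_fin W_neq0.
by exists c, v; split=> //; rewrite -Cz_scaleC.
Qed.

Lemma eigenspace_sl2_submodule c :
  sl2_submodule E F H (fun v => phi v = c *: v).
Proof.
have [phiE phiF phiH] := phi_endo; split=> [|d v w phiv phiw|v phiv|v phiv|v phiv].
- by rewrite linear0 scaler0.
- by rewrite linearP phiv phiw scalerDr !scalerA mulrC.
- by rewrite phiE phiv linearZ.
- by rewrite phiF phiv linearZ.
- by rewrite phiH phiv linearZ.
Qed.

Lemma eigenspace_Cz_subspace c : Cz_subspace act (fun v => phi v = c *: v).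
Proof.
split=> [|v w phiv phiw|a v phiv]; first by rewrite linear0 scaler0.
  by rewrite linearD phiv phiw scalerDr.
have phi_act : phi (act a v) = act a (phi v) := Cz_map_phi_scalable a v.
by rewrite phi_act phiv -!Cz_scaleC [X in _ = X](@scalerA _ V) mulrC -scalerA.
Qed.

End RationalModules.

Theorem proposition6p17 (R : realType) (W : lmodType R[i])
  (E F H : {linear W -> W}) (act : {fraction {poly R[i]}} -> W -> W) :
  rational_sl2 E F H act -> R_simple E F H act ->
  forall phi : {linear W -> W}, sl2_endo E F H phi ->
    exists c : R[i], forall v, phi v = c *: v.
Proof.
move=> [W_sl2 W_Cz W_fin] [W_neq0 W_simple] phi phi_endo.
have [c [v [v0 phiv]]] := sl2_endo_eigenvector W_sl2 W_Cz phi_endo W_fin W_neq0.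
exists c; have [eig0|//] := W_simple _ (eigenspace_sl2_submodule phi_endo c)
  (eigenspace_Cz_subspace W_Cz phi_endo c).
by case/eqP: v0; apply: eig0.
Qed.
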